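(* Let $k$ be an algebraically closed field and let $A$ be a primitive just infinite $k$-algebra which does not satisfy a polynomial identity. If $A$ satisfies the Nullstellensatz, then $A$ is stably just infinite.
   Context: All rings are associative unital algebras over a field. A $k$-algebra $A$ is called just infinite if $\dim_k(A)=\infty$ and every nonzero two-sided ideal of $A$ has finite codimension in $A$. A just infinite $k$-algebra $A$ is stably just infinite if $A\otimes_k K$ is just infinite over $K$ for every field extension $K/k$. A $k$-algebra $A$ satisfies the Nullstellensatz if every prime ideal of $A$ is an intersection of primitive ideals and, for every simple $A$-module $M$, the division ring $\operatorname{End}_A(M)$ is algebraic over $k$. *)

From HB Require Import structures.
From mathcomp Require Import all_boot all_algebra.
Set Implicit Arguments. Unset Strict Implicit. Unset Printing Implicit Defensive.
Import GRing.Theory.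
Local Open Scope ring_scope.

(* Algebras over a field F are modelled as [algType F] (associative, unital,
   scalars central).  Subsets / ideals are predicates [A -> Prop]. *)

Section AlgDefs.
Variables (F : fieldType) (A : algType F).

Definition in_span (s : seq A) (a : A) : Prop :=
  exists c : nat -> F, a = \sum_(i < size s) c i *: s`_i.

Definition infinite_dim : Prop := ~ exists s : seq A, forall a, in_span s a.

Definition two_sided_ideal (I : A -> Prop) : Prop :=
  [/\ I 0, (forall x y, I x -> I y -> I (x - y)),
      (forall a x, I x -> I (a * x)) & (forall a x, I x -> I (x * a))].

Definition finite_codim (I : A -> Prop) : Prop :=
  exists s : seq A, forall a, exists c : nat -> F,
    I (a - \sum_(i < size s) c i *: s`_i).

Definition just_infinite : Prop :=
  infinite_dim /\
  forall I, two_sided_ideal I -> (exists x, I x /\ x != 0) -> finite_codim I.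

Definition submodule (M : lmodType A) (S : M -> Prop) : Prop :=
  [/\ S 0, (forall m n, S m -> S n -> S (m - n)) & (forall (a : A) m, S m -> S (a *: m))].

Definition simple_module (M : lmodType A) : Prop :=
  (exists m : M, m != 0) /\
  forall S : M -> Prop, submodule S -> (forall m, S m -> m = 0) \/ (forall m, S m).

Definition faithful_module (M : lmodType A) : Prop :=
  forall a : A, (forall m : M, a *: m = 0) -> a = 0.

Definition primitive_algebra : Prop :=
  exists M : lmodType A, simple_module M /\ faithful_module M.

Definition annihilator (M : lmodType A) (a : A) : Prop := forall m : M, a *: m = 0.

Definition primitive_ideal (P : A -> Prop) : Prop :=
  exists M : lmodType A, simple_module M /\ forall a, P a <-> annihilator M a.

Definition prime_ideal (P : A -> Prop) : Prop :=
  [/\ two_sided_ideal P, (exists a, ~ P a) &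
      forall I J, two_sided_ideal I -> two_sided_ideal J ->
        (forall x y, I x -> J y -> P (x * y)) ->
        (forall x, I x -> P x) \/ (forall y, J y -> P y)].

Definition module_endo (M : lmodType A) (f : M -> M) : Prop :=
  (forall m n, f (m + n) = f m + f n) /\ (forall (a : A) m, f (a *: m) = a *: f m).

Definition algebraic_endo (M : lmodType A) (f : M -> M) : Prop :=
  exists p : {poly F}, p != 0 /\
    forall m : M, \sum_(i < size p) ((p`_i)%:A : A) *: iter i f m = 0.

Definition nullstellensatz : Prop :=
  (forall P, prime_ideal P ->
     exists Fam : (A -> Prop) -> Prop,
       (forall Q, Fam Q -> primitive_ideal Q) /\
       (forall a, P a <-> forall Q, Fam Q -> Q a)) /\
  (forall M : lmodType A, simple_module M ->
     forall f : M -> M, module_endo f -> algebraic_endo f).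

(* A satisfies a polynomial identity: some nonzero element of the free algebra
   F<x_0, x_1, ...> vanishes on A.  A noncommutative polynomial is given by a
   duplicate-free list S of words (seq nat) and a coefficient function c; it is
   nonzero iff some word of S has nonzero coefficient. *)
Definition PI_algebra : Prop :=
  exists (S : seq (seq nat)) (c : seq nat -> F),
    [/\ uniq S, (exists2 w, w \in S & c w != 0) &
        forall x : nat -> A, \sum_(w <- S) c w *: \prod_(i <- w) x i = 0].

End AlgDefs.

Definition lin_indep (F : fieldType) (V : lmodType F) (s : seq V) : Prop :=
  forall c : nat -> F, \sum_(i < size s) c i *: s`_i = 0 ->
    forall i, (i < size s)%N -> c i = 0.

(* B (a K-algebra) together with iota : A -> B is the scalar extension
   A (x)_k K, where K is a field extension of k via phi : k -> K:
   iota is a ring morphism, semilinear along phi, iota(A) spans B over K,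
   and iota maps k-linearly independent families to K-linearly independent
   ones (so iota of a k-basis of A is a K-basis of B). This characterises
   A (x)_k K up to isomorphism of K-algebras. *)
Definition scalar_extension (k K : fieldType) (phi : {rmorphism k -> K})
    (A : algType k) (B : algType K) (iota : {rmorphism A -> B}) : Prop :=
  [/\ (forall (c : k) (a : A), iota (c *: a) = phi c *: iota a),
      (forall b : B, exists s : seq A, in_span (map iota s) b) &
      (forall s : seq A, lin_indep s -> lin_indep (map iota s))].

Definition stably_just_infinite (k : fieldType) (A : algType k) : Prop :=
  just_infinite A /\
  forall (K : fieldType) (phi : {rmorphism k -> K}) (B : algType K)
         (iota : {rmorphism A -> B}),
    scalar_extension phi iota -> just_infinite B.

(* Let M be a faithful simple A-module. By the Nullstellensatz every endomorphism of M is
   algebraic over the algebraically closed field k, hence a scalar. Consequently, if a0 <> 0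
   and every relation u1 a0 v1 = u2 a0 v2 also holds with a1 in place of a0, then a1 is a
   multiple of a0: the map r a0 m0 |-> r a1 m0 is a well-defined endomorphism of M.
   Now let x = sum_i mu_i (x) a_i be a nonzero element of an ideal I of A (x)_k K with as
   few terms as possible. Minimality makes a_0 nonzero and the mu_i independent over k, and
   forbids a_1 to be a multiple of a_0; but then some u1 x v1 - u2 x v2 would be a shorter
   nonzero element of I. So x = mu_0 (x) a_0, and I contains (A a_0 A) (x) K, which has
   finite codimension because A is just infinite. Infinite dimension passes to A (x)_k K
   because k-independent families of A stay K-independent. *)

From HB Require Import structures.
From mathcomp Require Import all_boot all_algebra.
From Stdlib Require Import Classical IndefiniteDescription.
Set Implicit Arguments. Unset Strict Implicit. Unset Printing Implicit Defensive.
Import GRing.Theory.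
Local Open Scope ring_scope.

Section ModuleEndomorphisms.
Variables (k : fieldType) (A : algType k) (M : lmodType A).
Implicit Types (f g : M -> M) (m n : M).

Lemma module_endo0 f : module_endo f -> f 0 = 0.
Proof. by case=> fD _; apply: (addrI (f 0)); rewrite -fD !addr0. Qed.

Lemma module_endoB f m n : module_endo f -> f (m - n) = f m - f n.
Proof.
move=> endo_f; have [fD _] := endo_f; rewrite fD; congr (_ + _).
by apply: (addrI (f n)); rewrite -fD !subrr module_endo0.
Qed.

Lemma module_endo_iter f i : module_endo f -> module_endo (iter i f).
Proof.
case=> fD fZ; split=> [m n|a m]; elim: i => //= i ->; [exact: fD | exact: fZ].
Qed.

Lemma module_endo_subr_scalar f (l : k) :
  module_endo f -> module_endo (fun m => f m - l%:A *: m).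
Proof.
case=> fD fZ; split=> [m n|a m]; first by rewrite fD scalerDr addrACA opprD.
by rewrite fZ scalerBr !scalerA mulr_algl mulr_algr.
Qed.

Lemma submodule_range g : module_endo g -> submodule (fun m => exists n, m = g n).
Proof.
move=> endo_g; split.
- by exists 0; rewrite module_endo0.
- by move=> _ _ [m ->] [n ->]; exists (m - n); rewrite module_endoB.
- by move=> a _ [n ->]; exists (a *: n); case: endo_g => _ ->.
Qed.

Lemma simple_module_cyclic v m : simple_module M -> v != 0 -> exists r : A, m = r *: v.
Proof.
case=> _ simpleM v_neq0.
have span_v : submodule (fun m => exists r : A, m = r *: v).
  split.
  - by exists 0; rewrite scale0r.
  - by move=> _ _ [a ->] [b ->]; exists (a - b); rewrite scalerBl.
  - by move=> a _ [b ->]; exists (a * b); rewrite scalerA.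
case: (simpleM _ span_v) => [span0|]; last exact.
by move/eqP: v_neq0; case; apply: span0; exists 1; rewrite scale1r.
Qed.

Lemma simple_endo_eq0_or_onto g : simple_module M -> module_endo g ->
  (forall m, g m = 0) \/ (forall m, exists n, m = g n).
Proof.
case=> _ simpleM endo_g; case: (simpleM _ (submodule_range endo_g)) => [g0|]; last by right.
by left=> m; apply: g0; exists m.
Qed.

End ModuleEndomorphisms.

Lemma scale_alg_eq0 (k : fieldType) (A : algType k) (M : lmodType A) (c : k) (m : M) :
  c != 0 -> c%:A *: m = 0 -> m = 0.
Proof.
by move=> c_neq0 cm0; rewrite -[m]scale1r -(scale1r 1) -(mulVf c_neq0) -scalerA
  -mulr_algl -scalerA cm0 scaler0.
Qed.

Section EndoHorner.
Variables (k : fieldType) (A : algType k) (M : lmodType A) (f : M -> M).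
Hypothesis endo_f : module_endo f.
Implicit Types (p q : {poly k}) (m n : M).

Definition endo_horner N p m := \sum_(i < N) (p`_i)%:A *: iter i f m.

Lemma endo_horner_size N p m :
  (size p <= N)%N -> endo_horner N p m = endo_horner (size p) p m.
Proof.
move=> le_p_N; rewrite /endo_horner -(subnKC le_p_N) big_split_ord /=.
by rewrite [X in _ + X]big1 ?addr0 // => i _; rewrite nth_default ?leq_addr // !scale0r.
Qed.

Lemma endo_hornerBr N p m n :
  endo_horner N p (m - n) = endo_horner N p m - endo_horner N p n.
Proof.
rewrite -sumrB; apply: eq_bigr => i _.
by rewrite module_endoB ?scalerBr //; apply: module_endo_iter.
Qed.

Lemma endo_hornerBl N p q m :
  endo_horner N (p - q) m = endo_horner N p m - endo_horner N q m.
Proof. by rewrite -sumrB; apply: eq_bigr => i _; rewrite coefB scalerBl scalerBl. Qed.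

Lemma endo_horner_mulX N p m : endo_horner N.+1 (p * 'X) m = endo_horner N p (f m).
Proof.
rewrite /endo_horner big_ord_recl coefMX /= !scale0r add0r.
by apply: eq_bigr => i _; rewrite coefMX /= -iterSr.
Qed.

Lemma endo_horner_mulC N p (c : k) m :
  endo_horner N (p * c%:P) m = endo_horner N p (c%:A *: m).
Proof.
apply: eq_bigr => i _; have [_ fZ] := module_endo_iter i endo_f.
rewrite coefMC fZ scalerA; congr (_ *: _).
by rewrite -scalerAl mul1r scalerA.
Qed.

Lemma endo_horner_mulXsubC N p (c : k) m : (size p <= N)%N ->
  endo_horner N.+1 (p * ('X - c%:P)) m = endo_horner N p (f m - c%:A *: m).
Proof.
move=> le_p_N; rewrite mulrBr endo_hornerBl endo_horner_mulX endo_horner_mulC.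
by rewrite endo_hornerBr !endo_horner_size ?(leqW le_p_N).
Qed.

End EndoHorner.

Lemma simple_algebraic_endo_scalar (k : closedFieldType) (A : algType k) (M : lmodType A)
    (f : M -> M) :
  simple_module M -> module_endo f -> algebraic_endo f ->
  exists l : k, forall m, f m = l%:A *: m.
Proof.
move=> simpleM endo_f [p [p_neq0 pf0]].
elim: {p}(size p) {-2}p (leqnn (size p)) p_neq0 pf0 => [|n IHn] p le_p_n p_neq0 pf0.
  by move: p_neq0; rewrite -size_poly_eq0 -leqn0 le_p_n.
have [[m0 m0_neq0] _] := simpleM.
have [p_const|/closed_rootP[l /factor_theorem def_p]] := eqVneq (size p) 1%N.
  have p0_neq0 : p`_0 != 0 by move: p_neq0; rewrite -lead_coef_eq0 lead_coefE p_const.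
  case/eqP: m0_neq0; apply: (scale_alg_eq0 p0_neq0).
  by have := pf0 m0; rewrite /algebraic_endo p_const big_ord1.
case: def_p p_neq0 le_p_n pf0 => q -> pq_neq0 le_pq_n pqf0.
have q_neq0 : q != 0 by apply: contraNneq pq_neq0 => ->; rewrite mul0r.
have size_pq : size (q * ('X - l%:P)) = (size q).+1.
  by rewrite size_Mmonic ?monicXsubC ?size_XsubC ?addn2.
have [f_scalar|g_onto] := simple_endo_eq0_or_onto simpleM (module_endo_subr_scalar l endo_f).
  by exists l => m; apply/eqP; rewrite -subr_eq0 f_scalar.
apply: (IHn q _ q_neq0); first by rewrite -ltnS -size_pq.
move=> m; have [n' ->] := g_onto m.
change (endo_horner f (size q) q (f n' - l%:A *: n') = 0).
by rewrite -endo_horner_mulXsubC // -size_pq; apply: pqf0.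
Qed.

Lemma faithful_module_neq0 (k : fieldType) (A : algType k) (M : lmodType A) (a : A) :
  faithful_module M -> a != 0 -> exists m : M, a *: m != 0.
Proof.
move=> faithfulM a_neq0; apply: NNPP => no_m; case/eqP: a_neq0; apply: faithfulM => m.
by apply: NNPP => am_neq0; apply: no_m; exists m; apply/eqP.
Qed.

Lemma cyclic_module_endo (k : fieldType) (A : algType k) (M : lmodType A) (n0 x : M) :
  (forall m, exists r : A, m = r *: n0) -> (forall r : A, r *: n0 = 0 -> r *: x = 0) ->
  exists f, module_endo f /\ forall r : A, f (r *: n0) = r *: x.
Proof.
move=> n0_gen ann_x.
pose coef m := proj1_sig (constructive_indefinite_description _ (n0_gen m)).
have coefE m : m = coef m *: n0.
  exact: proj2_sig (constructive_indefinite_description _ (n0_gen m)).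
have fE r : coef (r *: n0) *: x = r *: x.
  by apply/eqP; rewrite -subr_eq0 -scalerBl; apply/eqP/ann_x; rewrite scalerBl -coefE subrr.
exists (fun m => coef m *: x); split; last exact: fE.
split=> [m n|a m]; rewrite {1}[m]coefE; first by rewrite {1}[n]coefE -scalerDl fE scalerDl.
by rewrite scalerA fE scalerA.
Qed.

Definition sandwich_determined (R : ringType) (a0 a1 : R) : Prop :=
  forall u1 v1 u2 v2, u1 * a0 * v1 = u2 * a0 * v2 -> u1 * a1 * v1 = u2 * a1 * v2.

Lemma sandwich_determined_scalar (k : closedFieldType) (A : algType k) (M : lmodType A) :
  simple_module M -> faithful_module M ->
  (forall f : M -> M, module_endo f -> algebraic_endo f) ->
  forall a0 a1 : A, a0 != 0 -> sandwich_determined a0 a1 -> exists l : k, a1 = l *: a0.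
Proof.
move=> simpleM faithfulM endo_algebraic a0 a1 a0_neq0 a01.
have [m0 n0_neq0] := faithful_module_neq0 faithfulM a0_neq0; set n0 := a0 *: m0 in n0_neq0.
have n0_gen m := simple_module_cyclic m simpleM n0_neq0.
have ann_a1m0 (r : A) : r *: n0 = 0 -> r *: (a1 *: m0) = 0.
  move=> rn0; apply: contraTeq n0_neq0 => ra1m0_neq0.
  have [w m0E] := simple_module_cyclic m0 simpleM ra1m0_neq0.
  have := a01 (a0 * w * r) 1 1 (w * r * a0); rewrite !mulr1 !mul1r !mulrA => /(_ erefl) a1E.
  by rewrite /n0 {1}m0E !scalerA mulrA a1E -!scalerA rn0 !scaler0 eqxx.
have [f [endo_f fE]] := cyclic_module_endo n0_gen ann_a1m0.
have [l fl] := simple_algebraic_endo_scalar simpleM endo_f (endo_algebraic f endo_f).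
exists l; apply/eqP; rewrite -subr_eq0; apply/eqP/faithfulM => m.
have [r ->] := n0_gen m.
have := a01 1 (r * a0) (a0 * r) 1; rewrite !mulr1 !mul1r !mulrA => /(_ erefl) a1E.
rewrite scalerBl /n0 !scalerA a1E -mulrA -!scalerA -fE fl.
by rewrite [X in X - _]scalerA mulr_algr subrr.
Qed.

Lemma big_ord_bump (V : nmodType) n j (F : nat -> V) : (j < n.+1)%N ->
  \sum_(i < n.+1) F i = F j + \sum_(i < n) F (bump j i).
Proof. by move=> lt_j_n; rewrite (bigD1_ord (Ordinal lt_j_n)). Qed.

Lemma bump_ltn j i n : (i < n)%N -> (bump j i < n.+1)%N.
Proof. by rewrite /bump; case: (j <= i)%N => /= lt_i_n; rewrite ?add1n ?add0n // ltnW. Qed.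

Lemma neq_bump_exists j x n : (j < n.+1)%N -> (x < n.+1)%N -> x != j ->
  exists2 i, (i < n)%N & x = bump j i.
Proof.
move=> lt_j_n lt_x_n x_neq_j; exists (unbump j x); last by rewrite unbumpK //= inE.
rewrite /unbump; case: (ltngtP j x) => [j_lt_x|x_lt_j|j_eq_x].
- by rewrite subn1 -ltnS (ltn_predK j_lt_x).
- by rewrite subn0 (leq_trans x_lt_j).
- by rewrite j_eq_x eqxx in x_neq_j.
Qed.

Section LinearAlgebra.
Variables (F : fieldType) (V : lmodType F).

Lemma solve_dependence n (c : nat -> F) (v : nat -> V) j :
  (j < n.+1)%N -> c j != 0 -> \sum_(i < n.+1) c i *: v i = 0 ->
  v j = \sum_(i < n) (- (c (bump j i) / c j)) *: v (bump j i).
Proof.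
move=> lt_j_n cj_neq0; rewrite (big_ord_bump (fun i => c i *: v i) lt_j_n).
move=> /eqP; rewrite addr_eq0 => /eqP cvj.
apply: (scalerI cj_neq0); rewrite cvj scaler_sumr -sumrN; apply: eq_bigr => i _.
by rewrite scalerA mulrN mulrCA divff // mulr1 scaleNr.
Qed.

Lemma not_lin_indep (s : seq V) : ~ lin_indep s ->
  exists c j, [/\ (j < size s)%N, c j != 0 & \sum_(i < size s) c i *: s`_i = 0].
Proof.
move=> /(not_all_ex_not _ _)[c c_dep].
have [cs0 /(not_all_ex_not _ _)[j j_dep]] := imply_to_and _ _ c_dep.
by have [lt_j cj] := imply_to_and _ _ j_dep; exists c, j; split=> //; apply/eqP.
Qed.

Lemma lin_indep_size_le (s t : seq V) :
  (forall j, (j < size t)%N -> exists c : nat -> F, t`_j = \sum_(i < size s) c i *: s`_i) ->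
  lin_indep t -> (size t <= size s)%N.
Proof.
move=> t_in_s t_indep; rewrite leqNgt; apply/negP => lt_s_t.
have /fin_all_exists[c tE] (j : 'I_(size t)) := t_in_s j (ltn_ord j).
pose C : 'M[F]_(size t, size s) := \matrix_(j, i) c j i.
have : kermx C != 0.
  rewrite kermx_eq0 /row_free; apply: contraTneq lt_s_t => <-.
  by rewrite -leqNgt rank_leq_col.
case/rowV0Pn=> v /sub_kermxP vC0; apply/negP; rewrite negbK; apply/eqP/rowP => j.
rewrite mxE -[j in v 0 j](valKd j).
apply: (t_indep (fun j' => v 0 (insubd j j'))) (ltn_ord j).
under eq_bigr => j' _ do rewrite valKd tE scaler_sumr.
rewrite exchange_big big1 // => i _ /=.
have := congr1 (fun M : 'M[F]_(1, size s) => M 0 i) vC0; rewrite !mxE => vCi.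
rewrite -[RHS](scale0r s`_i) -vCi scaler_suml; apply: eq_bigr => j' _.
by rewrite mxE scalerA.
Qed.

End LinearAlgebra.

Lemma infinite_dim_lin_indep (F : fieldType) (A : algType F) n :
  infinite_dim A -> exists t : seq A, size t = n /\ lin_indep t.
Proof.
move=> infA; elim: n => [|n [t [size_t t_indep]]]; first by exists [::]; split=> // c _ [].
have [a a_notin] : exists a, ~ in_span t a.
  by apply: not_all_ex_not => t_span; apply: infA; exists t.
exists (a :: t); split; first by rewrite /= size_t.
move=> c cs0.
have c0 : c 0%N = 0.
  apply: NNPP => /eqP c0_neq0; apply: a_notin; exists (fun i => - (c i.+1 / c 0%N)).
  exact: (solve_dependence (v := nth 0 (a :: t)) (ltn0Sn _) c0_neq0 cs0).
move: cs0; rewrite /= big_ord_recl c0 scale0r add0r => /(t_indep (fun i => c i.+1)) cs0.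
by case=> [|i] // /cs0.
Qed.

Section Ideals.
Variables (F : fieldType) (C : algType F) (I : C -> Prop).
Hypothesis idI : two_sided_ideal I.

Lemma ideal_add x y : I x -> I y -> I (x + y).
Proof.
move=> Ix Iy; have [I0 IB _ _] := idI.
by have := IB _ _ Ix (IB _ _ I0 Iy); rewrite sub0r opprK.
Qed.

Lemma ideal_scale (c : F) x : I x -> I (c *: x).
Proof. by have [_ _ IM _] := idI; rewrite -mulr_algl; apply: IM. Qed.

Lemma ideal_sandwich_sub u1 v1 u2 v2 x :
  I x -> I (u1 * x * v1 - u2 * x * v2).
Proof. by move=> Ix; have [_ IB IMl IMr] := idI; apply: IB; apply: IMr; apply: IMl. Qed.

Definition congr_span (s : seq C) (b : C) : Prop :=
  exists c : nat -> F, I (b - \sum_(i < size s) c i *: s`_i).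

Lemma congr_span_comb s n (mu : nat -> F) (v : nat -> C) :
  (forall i, congr_span s (v i)) -> congr_span s (\sum_(i < n) mu i *: v i).
Proof.
move=> sv; elim: n => [|n [c1 Ic1]].
  by exists (fun=> 0); rewrite big_ord0 big1 ?subrr => [|i _]; [case: idI | rewrite scale0r].
have [c2 Ic2] := sv n; exists (fun i => c1 i + mu n * c2 i).
have -> : \sum_(i < size s) (c1 i + mu n * c2 i) *: s`_i =
    \sum_(i < size s) c1 i *: s`_i + mu n *: \sum_(i < size s) c2 i *: s`_i.
  by rewrite scaler_sumr -big_split; apply: eq_bigr => i _; rewrite scalerDl scalerA.
rewrite big_ord_recr /= opprD addrACA -scalerBr.
by apply: ideal_add => //; apply: ideal_scale.
Qed.

End Ideals.

Lemma two_sided_ideal_preim (F F' : fieldType) (A : algType F) (B : algType F')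
    (f : {rmorphism A -> B}) (I : B -> Prop) :
  two_sided_ideal I -> two_sided_ideal (fun x => I (f x)).
Proof.
case=> I0 IB IMl IMr; split=> [|x y|u x|u x]; rewrite ?rmorph0 ?rmorphB ?rmorphM //.
- exact: IB.
- exact: IMl.
- exact: IMr.
Qed.

Section ScalarExtension.
Variables (k K : fieldType) (phi : {rmorphism k -> K}) (A : algType k) (B : algType K).
Variable iota : {rmorphism A -> B}.
Hypothesis iota_ext : scalar_extension phi iota.

Lemma iotaZ (c : k) (a : A) : iota (c *: a) = phi c *: iota a.
Proof. by case: iota_ext. Qed.

Definition iota_comb n (mu : nat -> K) (a : nat -> A) : B := \sum_(i < n) mu i *: iota (a i).

Definition scalars_free n (mu : nat -> K) : Prop :=
  forall d : nat -> k, \sum_(i < n) phi (d i) * mu i = 0 -> forall i, (i < n)%N -> d i = 0.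

Lemma not_scalars_free n mu : ~ scalars_free n mu ->
  exists d j, [/\ (j < n)%N, d j != 0 & \sum_(i < n) phi (d i) * mu i = 0].
Proof.
move=> /(not_all_ex_not _ _)[d d_dep].
have [dmu0 /(not_all_ex_not _ _)[j j_dep]] := imply_to_and _ _ d_dep.
by have [lt_j dj] := imply_to_and _ _ j_dep; exists d, j; split=> //; apply/eqP.
Qed.

Lemma iota_comb_elim_vec n mu a j (e : nat -> k) :
  (j < n.+1)%N -> a j = \sum_(i < n) e i *: a (bump j i) ->
  iota_comb n.+1 mu a = iota_comb n (fun i => mu (bump j i) + phi (e i) * mu j)
    (fun i => a (bump j i)).
Proof.
move=> lt_j aj; rewrite /iota_comb (big_ord_bump (fun i => mu i *: iota (a i)) lt_j).
rewrite aj rmorph_sum scaler_sumr -big_split; apply: eq_bigr => i _ /=.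
by rewrite iotaZ scalerA scalerDl mulrC addrC.
Qed.

Lemma iota_comb_elim_scalar n mu a j (e : nat -> k) :
  (j < n.+1)%N -> mu j = \sum_(i < n) phi (e i) * mu (bump j i) ->
  iota_comb n.+1 mu a = iota_comb n (mu \o bump j) (fun i => a (bump j i) + e i *: a j).
Proof.
move=> lt_j muj; rewrite /iota_comb (big_ord_bump (fun i => mu i *: iota (a i)) lt_j).
rewrite muj scaler_suml -big_split; apply: eq_bigr => i _ /=.
by rewrite rmorphD iotaZ scalerDr scalerA mulrC addrC.
Qed.

Lemma scalars_free_behead n mu : scalars_free n.+1 mu -> scalars_free n (fun i => mu i.+1).
Proof.
move=> free_mu d dmu0 i lt_i.
apply: (free_mu (fun i => if i is i'.+1 then d i' else 0) _ i.+1) => //.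
by rewrite big_ord_recl rmorph0 mul0r add0r.
Qed.

Lemma scalars_free_elim n mu j (e : nat -> k) : (j < n.+1)%N -> scalars_free n.+1 mu ->
  scalars_free n (fun i => mu (bump j i) + phi (e i) * mu j).
Proof.
move=> lt_j free_mu d dmu0 i lt_i.
pose D x := if x == j then \sum_(i < n) d i * e i else d (unbump j x).
have DE i' : D (bump j i') = d i' by rewrite /D eq_sym (negbTE (neq_bump j i')) bumpK.
rewrite -DE; apply: free_mu (bump_ltn j lt_i).
rewrite (big_ord_bump (fun x => phi (D x) * mu x) lt_j).
under eq_bigr do rewrite DE.
rewrite /D eqxx.
rewrite rmorph_sum mulr_suml -big_split -[RHS]dmu0; apply: eq_bigr => i' _ /=.
by rewrite rmorphM mulrDr addrC mulrA.
Qed.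

Lemma iota_comb_eq0 n mu a : scalars_free n mu -> iota_comb n mu a = 0 ->
  forall i, (i < n)%N -> a i = 0.
Proof.
elim: n mu a => [//|n IHn] mu a free_mu comb0.
have [a_indep|/not_lin_indep[c [j []]]] := classic (lin_indep (mkseq a n.+1)).
  have [_ _ /(_ _ a_indep) iota_a_indep] := iota_ext.
  have mu0 i : (i < n.+1)%N -> mu i = 0.
    move=> lt_i; apply: (iota_a_indep mu); last by rewrite size_map size_mkseq.
    rewrite size_map size_mkseq -[RHS]comb0.
    by apply: eq_bigr => i' _; rewrite (nth_map 0) ?size_mkseq // nth_mkseq.
  have := free_mu (fun=> 1) _ 0%N (ltn0Sn n); rewrite big1 => [/(_ erefl)/eqP|i _].
    by rewrite oner_eq0.
  by rewrite mu0 ?mulr0.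
rewrite size_mkseq => lt_j cj_neq0 ca0.
pose e i := - (c (bump j i) / c j).
have aj : a j = \sum_(i < n) e i *: a (bump j i).
  apply: (solve_dependence lt_j cj_neq0); rewrite -[RHS]ca0.
  by apply: eq_bigr => i _; rewrite nth_mkseq.
have free_mu' := scalars_free_elim (e := e) lt_j free_mu.
move: comb0; rewrite (iota_comb_elim_vec mu lt_j aj) => /(IHn _ _ free_mu') a'0 x lt_x.
have [->|/(neq_bump_exists lt_j lt_x)[i lt_i ->]] := eqVneq x j; last exact: a'0.
by rewrite aj big1 // => i _; rewrite a'0 ?scaler0.
Qed.

Section IdealOfExtension.
Variable I : B -> Prop.
Hypothesis idI : two_sided_ideal I.

Definition has_nonzero_of_length n : Prop :=
  exists mu a, iota_comb n mu a != 0 /\ I (iota_comb n mu a).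

Lemma iota_comb_sandwich_sub n mu a (u1 v1 u2 v2 : A) :
  iota u1 * iota_comb n mu a * iota v1 - iota u2 * iota_comb n mu a * iota v2 =
  iota_comb n mu (fun i => u1 * a i * v1 - u2 * a i * v2).
Proof.
rewrite /iota_comb !(mulr_sumr, mulr_suml) -sumrB; apply: eq_bigr => i _.
by rewrite -!scalerAr -!scalerAl -scalerBr !rmorphB !rmorphM.
Qed.

Lemma has_nonzero_of_length_sandwich n mu a :
  scalars_free n.+2 mu -> ~ sandwich_determined (a 0%N) (a 1%N) ->
  I (iota_comb n.+2 mu a) -> has_nonzero_of_length n.+1.
Proof.
move=> free_mu a01 Ix.
have [u1 [v1 [u2 [v2 [a0E a1E]]]]] : exists u1 v1 u2 v2,
    u1 * a 0%N * v1 = u2 * a 0%N * v2 /\ u1 * a 1%N * v1 <> u2 * a 1%N * v2.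
  apply: NNPP => no_witness; apply: a01 => u1 v1 u2 v2 a0E.
  by apply: NNPP => a1E; apply: no_witness; exists u1, v1, u2, v2.
have := ideal_sandwich_sub idI (iota u1) (iota v1) (iota u2) (iota v2) Ix.
rewrite iota_comb_sandwich_sub [iota_comb _ _ _]big_ord_recl /= a0E subrr rmorph0 scaler0 add0r.
move=> Iy; exists (fun i => mu i.+1), (fun i => u1 * a i.+1 * v1 - u2 * a i.+1 * v2).
split=> //.
apply/eqP => /(iota_comb_eq0 (scalars_free_behead free_mu)) /(_ 0%N erefl) /eqP.
by rewrite subr_eq0 => /eqP.
Qed.

Hypothesis centroid_scalar :
  forall a0 a1 : A, a0 != 0 -> sandwich_determined a0 a1 -> exists l : k, a1 = l *: a0.

Lemma has_nonzero_of_length_shrink n :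
  has_nonzero_of_length n.+2 -> has_nonzero_of_length n.+1.
Proof.
case=> mu [a [x_neq0 Ix]].
have shorter mu' a' : iota_comb n.+2 mu a = iota_comb n.+1 mu' a' ->
    has_nonzero_of_length n.+1.
  by move=> xE; exists mu', a'; rewrite -xE.
have [a00|a0_neq0] := eqVneq (a 0%N) 0.
  apply: (shorter _ _ (iota_comb_elim_vec mu (e := fun=> 0) (ltn0Sn _) _)).
  by rewrite a00 big1 // => i _; rewrite scale0r.
have [free_mu|/not_scalars_free[d [j [lt_j dj_neq0 dmu0]]]] :=
  classic (scalars_free n.+2 mu); last first.
  apply: (shorter _ _ (iota_comb_elim_scalar a (e := fun i => - (d (bump j i) / d j)) lt_j _)).
  have phidj_neq0 : phi (d j) != 0 by rewrite fmorph_eq0.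
  rewrite (@solve_dependence _ K^o _ (phi \o d) mu _ lt_j phidj_neq0 dmu0).
  by apply: eq_bigr => i _; rewrite rmorphN fmorph_div.
have [a01|] := classic (sandwich_determined (a 0%N) (a 1%N)); last first.
  by move=> not_a01; exact: (has_nonzero_of_length_sandwich free_mu not_a01 Ix).
have [l a1E] := centroid_scalar a0_neq0 a01.
pose e i := if i is 0%N then l else 0.
have a1E' : a 1%N = \sum_(i < n.+1) e i *: a (bump 1 i).
  by rewrite big_ord_recl big1 /= ?addr0 // => i _; rewrite scale0r.
exact: shorter _ _ (iota_comb_elim_vec mu (isT : (1 < n.+2)%N) a1E').
Qed.

Lemma has_nonzero_of_length_image n :
  has_nonzero_of_length n.+1 -> exists a : A, a != 0 /\ I (iota a).
Proof.
elim: n => [|n IHn /has_nonzero_of_length_shrink]; last exact: IHn.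
case=> mu [a []]; rewrite /iota_comb big_ord1 => x_neq0 Ix; exists (a 0%N); split.
  by apply: contraNneq x_neq0 => ->; rewrite rmorph0 scaler0.
have mu0_neq0 : mu 0%N != 0 by apply: contraNneq x_neq0 => ->; rewrite scale0r.
by rewrite -[iota _]scale1r -(mulVf mu0_neq0) -scalerA; apply: ideal_scale.
Qed.

Lemma ideal_meets_image x : I x -> x != 0 -> exists a : A, a != 0 /\ I (iota a).
Proof.
have [_ /(_ x)[t [mu xE]] _] := iota_ext; rewrite size_map in xE.
have {}xE : x = iota_comb (size t) mu (nth 0 t).
  by rewrite xE; apply: eq_bigr => i _; rewrite (nth_map 0).
case: (size t) xE => [|n] -> Ix x_neq0; first by rewrite /iota_comb big_ord0 eqxx in x_neq0.
by apply: (has_nonzero_of_length_image (n := n)); exists mu, (nth 0 t).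
Qed.

End IdealOfExtension.

Lemma infinite_dim_ext : infinite_dim A -> infinite_dim B.
Proof.
move=> infA [s s_span]; have [t [size_t t_indep]] := infinite_dim_lin_indep (size s).+1 infA.
have [_ _ /(_ _ t_indep) iota_t_indep] := iota_ext.
have := lin_indep_size_le (fun j _ => s_span (map iota t)`_j) iota_t_indep.
by rewrite size_map size_t ltnn.
Qed.

Lemma finite_codim_ext (I : B -> Prop) (a : A) :
  just_infinite A -> two_sided_ideal I -> a != 0 -> I (iota a) -> finite_codim I.
Proof.
move=> [_ jiA] idI a_neq0 Ia.
have [s sJ] := jiA _ (two_sided_ideal_preim iota idI) (ex_intro _ a (conj Ia a_neq0)).
have s_iota x : congr_span I (map iota s) (iota x).
  have [c Ic] := sJ x; exists (phi \o c); rewrite size_map.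
  move: Ic; rewrite rmorphB rmorph_sum; congr (I (_ - _)); apply: eq_bigr => i _.
  by rewrite (nth_map 0) // iotaZ.
exists (map iota s) => b; have [_ /(_ b)[t [mu ->]] _] := iota_ext.
rewrite size_map; under eq_bigr => i _ do rewrite (nth_map 0) //.
exact: (congr_span_comb idI (size t) mu (fun i => s_iota t`_i)).
Qed.

End ScalarExtension.

Theorem proposition4p3 (k : closedFieldType) (A : algType k) :
  primitive_algebra A -> just_infinite A -> ~ PI_algebra A ->
  nullstellensatz A -> stably_just_infinite A.
Proof.
move=> [M [simpleM faithfulM]] jiA _ [_ endo_algebraic]; split=> // K phi B iota iota_ext.
split=> [|I idI [x [Ix x_neq0]]]; first exact: infinite_dim_ext iota_ext jiA.1.
have centroid := sandwich_determined_scalar simpleM faithfulM (endo_algebraic M simpleM).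
have [a [a_neq0 Ia]] := ideal_meets_image iota_ext idI centroid Ix x_neq0.
exact: (finite_codim_ext iota_ext jiA idI a_neq0 Ia).
Qed.
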